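(* Let $(X,\mathscr{A},\mu)$ be a $\sigma$-finite measure space and $\phi$ a nonsingular transformation of $X$ such that $\mathsf{h}_\phi<\infty$ a.e. $[\mu]$. Then the following are equivalent: (i) $\mathsf{E}(\mathsf{h}_{\phi^n})=\mathsf{h}_{\phi^n}$ a.e. $[\mu]$ for all $n\in\mathbb{N}$; (ii) $\mathsf{h}_{\phi^{n+1}}\circ\phi=\mathsf{h}_\phi\circ\phi\cdot\mathsf{h}_{\phi^n}$ a.e. $[\mu]$ for all $n\in\mathbb{N}$. Moreover, if (i) holds, then: (iii) $\mathsf{h}_{\phi^{m+n}}\circ\phi^n=\mathsf{h}_\phi\circ\phi\cdots\mathsf{h}_\phi\circ\phi^n\cdot\mathsf{h}_{\phi^m}$ a.e. $[\mu]$ for all $m\in\mathbb{Z}_+$, $n\in\mathbb{N}$; (iv) $\mathsf{h}_{\phi^{m+n}}\circ\phi^n=\mathsf{h}_{\phi^n}\circ\phi^n\cdot\mathsf{h}_{\phi^m}$ a.e. $[\mu]$ for all $m\in\mathbb{Z}_+$, $n\in\mathbb{N}$; (v) $\mathsf{h}_{\phi^n}\circ\phi^n=\mathsf{h}_\phi\circ\phi\cdots\mathsf{h}_\phi\circ\phi^n$ a.e. $[\mu]$ for all $n\in\mathbb{N}$; (vi) $\mathsf{h}_{\phi^{n+1}}\circ\phi^n=\mathsf{h}_\phi\circ\phi^0\cdots\mathsf{h}_\phi\circ\phi^n$ a.e. $[\mu]$ for all $n\in\mathbb{Z}_+$.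
   Context: $\mathbb{N}=\{1,2,\dots\}$, $\mathbb{Z}_+=\{0,1,\dots\}$. Conventions: $0\cdot\infty=0$, $1/0=\infty$, $0/0=1$. Nonsingular: $\phi^{-1}(\Delta)\in\mathscr{A}$ for $\Delta\in\mathscr{A}$ and $\mu(\phi^{-1}(\Delta))=0$ when $\mu(\Delta)=0$. $\phi^n$ is the $n$-fold composition ($\phi^0=\mathrm{id}_X$), $\mathsf{h}_{\phi^n}$ the Radon–Nikodym derivative of $\mu\circ(\phi^n)^{-1}$ w.r.t. $\mu$. $\mathsf{E}(f)$ is the conditional expectation of an $\mathscr{A}$-measurable $f\colon X\to[0,\infty]$ w.r.t. $\phi^{-1}(\mathscr{A})$: the a.e. unique $\phi^{-1}(\mathscr{A})$-measurable function with $\int(g\circ\phi)f\,\mathrm{d}\mu=\int(g\circ\phi)\mathsf{E}(f)\,\mathrm{d}\mu$ for all $\mathscr{A}$-measurable $g\ge0$. *)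

From HB Require Import structures.
From mathcomp Require Import all_boot all_order all_algebra.
From mathcomp Require Import all_classical all_reals all_analysis measurable_realfun.
Set Implicit Arguments. Unset Strict Implicit. Unset Printing Implicit Defensive.
Import Order.TTheory GRing.Theory Num.Theory.
Local Open Scope classical_set_scope.
Local Open Scope ring_scope.
Local Open Scope ereal_scope.

Section Defs.
Context {d : measure_display} {T : measurableType d} {R : realType}.

Definition nonsingular (mu : {measure set T -> \bar R}) (phi : T -> T) : Prop :=
  measurable_fun setT phi /\
  forall A : set T, measurable A -> mu A = 0 -> mu (phi @^-1` A) = 0.

Definition is_RN_deriv_iter (mu : {measure set T -> \bar R}) (phi : T -> T)
    (n : nat) (h : T -> \bar R) : Prop :=
  measurable_fun setT h /\ (forall x, 0 <= h x) /\
  forall A : set T, measurable A ->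
    mu (iter n phi @^-1` A) = \int[mu]_(x in A) h x.

(* g is phi^{-1}(A)-measurable: preimages of Borel sets of \bar R under g
   lie in the sigma-algebra {phi^{-1}(D) | D measurable} *)
Definition preimage_measurable (phi : T -> T) (g : T -> \bar R) : Prop :=
  forall B : set (\bar R), measurable B ->
    exists D : set T, measurable D /\ g @^-1` B = phi @^-1` D.

(* g is (a version of) the conditional expectation E(f) of f w.r.t. phi^{-1}(A) *)
Definition is_condexp (mu : {measure set T -> \bar R}) (phi : T -> T)
    (f g : T -> \bar R) : Prop :=
  preimage_measurable phi g /\ (forall x, 0 <= g x) /\
  forall u : T -> \bar R, measurable_fun setT u -> (forall x, 0 <= u x) ->
    \int[mu]_x (u (phi x) * f x) = \int[mu]_x (u (phi x) * g x).

Definition condexp_fixed (mu : {measure set T -> \bar R}) (phi : T -> T)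
    (f : T -> \bar R) : Prop :=
  exists g, is_condexp mu phi f g /\ {ae mu, forall x, g x = f x}.

End Defs.

(* Write r_n := h_{n+1} / h_1.  Since the image measure of mu under phi has
   density h_1, for every measurable D
     \int_{phi^-1 D} h_n = mu (phi^-(n+1) D) = \int_D h_{n+1}
                         = \int_{phi^-1 D} r_n o phi,
   so by uniqueness of phi^-1(A)-measurable densities (mu is sigma-finite)
   E(h_n) = r_n o phi a.e.  As h_1 o phi is a.e. positive and finite,
   E(h_n) = h_n is then the same as h_{n+1} o phi = h_1 o phi * h_n.
   Composing these identities with the nonsingular maps phi^k and using
   h_0 = 1 a.e. yields the product formulas. *)

From HB Require Import structures.
From mathcomp Require Import all_boot all_order all_algebra.
From mathcomp Require Import all_classical all_reals all_analysis measurable_realfun.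
From mathcomp Require Import lra.
Import Order.TTheory GRing.Theory Num.Theory.
Local Open Scope classical_set_scope.
Local Open Scope ring_scope.
Local Open Scope ereal_scope.

Lemma measurable_invr (R : realType) : measurable_fun setT (@GRing.inv R).
Proof.
have -> : [set: R] = [set x | x = 0%R] `|` [set x | x != 0%R].
  by apply/seteqP; split => x //= _; case: (eqVneq x 0%R); [left|right].
apply/measurable_funU; first exact: measurable_set1.
  by apply: open_measurable; exact: open_neq.
split; first exact: measurable_fun_set1.
apply: open_continuous_measurable_fun; first exact: open_neq.
by move=> x; rewrite inE => x0; exact: inv_continuous.
Qed.

Lemma nat_ratios_between {R : realType} (r s : R) : (0 <= r)%R -> (r < s)%R ->
  exists p q : nat, (r <= p%:R / q.+1%:R)%R /\ (p.+1%:R / q.+1%:R <= s)%R.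
Proof.
move=> r0 rs.
pose q := Num.truncn (2 / (s - r)); pose Q : R := q.+1%:R.
have Q0 : (0 < Q)%R by rewrite ltr0n.
have sQ : (2 < (s - r) * Q)%R.
  by rewrite mulrC -ltr_pdivrMr ?subr_gt0 //; exact: truncnS_gt.
have rQ0 : (0 <= r * Q)%R by rewrite mulr_ge0 // ltW.
have := truncn_le (r * Q); rewrite rQ0 => rQ_ge.
have rQ_lt := truncnS_gt (r * Q).
exists (Num.truncn (r * Q)).+1, q; split.
  by rewrite ler_pdivlMr // ltW.
rewrite ler_pdivrMr // -addn2 natrD -/Q; lra.
Qed.

Section nonsingular.
Context {d} {T : measurableType d} {R : realType} {mu : {measure set T -> \bar R}}.

Lemma nonsingular_iter {phi : T -> T} n :
  nonsingular mu phi -> nonsingular mu (iter n phi).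
Proof.
move=> [mphi phi0]; elim: n => [|n [mphin phin0]] /=.
  by split=> [|A _ ->//]; exact: measurable_id.
split; first exact: measurableT_comp.
move=> A mA A0; apply: phin0 (phi0 A mA A0).
by rewrite -[X in measurable X]setTI; exact: mphi.
Qed.

Lemma ae_comp_nonsingular {psi : T -> T} {P : T -> Prop} :
  nonsingular mu psi -> {ae mu, forall x, P x} -> {ae mu, forall x, P (psi x)}.
Proof.
move=> [mpsi psi0] [N [mN N0 PN]]; exists (psi @^-1` N); split.
- by rewrite -[X in measurable X]setTI; exact: mpsi.
- exact: psi0.
- by move=> x /= Px; apply: PN.
Qed.

End nonsingular.

Section integral_density.
Context d (T : measurableType d) (R : realType).
Variables (mu nu : {measure set T -> \bar R}) (g : T -> \bar R).
Hypotheses (mg : measurable_fun setT g) (g0 : forall x, 0 <= g x)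
  (nuE : forall A, measurable A -> nu A = \int[mu]_(x in A) g x).
Import HBNNSimple.

Lemma integral_nnsfun_density (E : set T) (s : {nnsfun T >-> R}) : measurable E ->
  \int[mu]_(x in E) ((s x)%:E * g x) = \int[nu]_(x in E) (s x)%:E.
Proof.
move=> mE.
have ms r : measurable_fun E (fun x => (r * \1_(s @^-1` [set r]) x)%:E).
  by apply: (measurable_comp measurableT) => //; exact: measurable_funM.
transitivity (\int[mu]_(x in E) \sum_(r \in range s)
    ((r * \1_(s @^-1` [set r]) x)%:E * g x)).
  apply: eq_integral => x _.
  rewrite -ge0_mule_fsuml => [|r]; last exact: nnfun_muleindic_ge0.
  by rewrite fsumEFin // -(fimfunE _ x).
transitivity (\int[nu]_(x in E) \sum_(r \in range s)
    (r * \1_(s @^-1` [set r]) x)%:E); last first.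
  by apply: eq_integral => x _; rewrite /= fimfunE -fsumEFin.
rewrite !ge0_integral_fsum //; last 3 first.
- by move=> r x _; exact: nnfun_muleindic_ge0.
- move=> r; apply: emeasurable_funM; [exact: ms|exact: measurable_funTS].
- by move=> r x _; rewrite mule_ge0 ?g0 ?nnfun_muleindic_ge0.
apply: eq_fsbigr => r /[!inE] -[t _ <-].
have msr : measurable (s @^-1` [set s t]) by exact: measurable_funPTI.
under [RHS]eq_integral do rewrite EFinM.
rewrite integralZl_indic_nnsfun //.
under eq_integral do rewrite EFinM -muleA.
rewrite ge0_integralZl //; last 3 first.
- by apply: emeasurable_funM; [exact/measurable_EFinP|exact: measurable_funTS].
- by move=> x _; rewrite mule_ge0 ?lee_fin ?g0.
- by rewrite lee_fin.
congr (_ * _).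
under eq_integral do rewrite muleC.
rewrite (eq_integral (g \_ (s @^-1` [set s t]))); last first.
  by move=> x _; rewrite epatch_indic.
rewrite -integral_mkcondr -nuE; last exact: measurableI.
by rewrite integral_indic // setIC.
Qed.

Lemma integral_density (E : set T) (f : T -> \bar R) : measurable E ->
  (forall x, E x -> g x \is a fin_num) ->
  (forall x, 0 <= f x) -> measurable_fun E f ->
  \int[mu]_(x in E) (f x * g x) = \int[nu]_(x in E) f x.
Proof.
move=> mE gfin f0 mf; pose s := nnsfun_approx mE mf.
have s_nd x : E x -> {homo (fun n => (s n x)%:E) : a b / (a <= b)%N >-> a <= b}.
  by move=> _ a b ab; rewrite lee_fin; exact/lefP/nd_nnsfun_approx.
have sf x : E x -> (s n x)%:E @[n --> \oo] --> f x.
  by move=> Ex; exact: cvg_nnsfun_approx.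
have -> : \int[nu]_(x in E) f x = lim (\int[nu]_(x in E) (s n x)%:E @[n --> \oo]).
  under eq_integral => x /[!inE] Ex do rewrite -(cvg_lim _ (sf x Ex)) //.
  apply: monotone_convergence => //.
  - by move=> n; apply/measurable_EFinP/measurable_funTS.
  - by move=> n x _; rewrite lee_fin.
have -> : \int[mu]_(x in E) (f x * g x) =
    lim (\int[mu]_(x in E) ((s n x)%:E * g x) @[n --> \oo]).
  have sfg x : E x -> ((s n x)%:E * g x) @[n --> \oo] --> f x * g x.
    by move=> Ex; apply: cvgeZr; [exact: gfin|exact: sf].
  under eq_integral => x /[!inE] Ex do rewrite -(cvg_lim _ (sfg x Ex)) //.
  apply: monotone_convergence => //.
  - move=> n; apply: emeasurable_funM; last exact: measurable_funTS.
    exact/measurable_EFinP/measurable_funTS.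
  - by move=> n x _; rewrite mule_ge0 ?lee_fin ?g0.
  - by move=> x Ex a b ab; rewrite lee_wpmul2r ?g0 // (s_nd x Ex).
by under eq_fun do rewrite integral_nnsfun_density //.
Qed.

End integral_density.

Lemma integral_comp_density d (T : measurableType d) (R : realType)
    (mu : {measure set T -> \bar R}) (phi : T -> T) (g : T -> \bar R)
    (E : set T) (f : T -> \bar R) :
  measurable_fun setT phi -> measurable_fun setT g -> (forall x, 0 <= g x) ->
  (forall A, measurable A -> mu (phi @^-1` A) = \int[mu]_(x in A) g x) ->
  measurable E -> (forall x, E x -> g x \is a fin_num) ->
  (forall x, 0 <= f x) -> measurable_fun E f ->
  \int[mu]_(x in phi @^-1` E) f (phi x) = \int[mu]_(x in E) (f x * g x).
Proof.
move=> mphi mg g0 gE mE gfin f0 mf.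
rewrite (@integral_density _ _ _ mu (pushforward mu phi) g) //.
by rewrite [RHS](ge0_integral_pushforward mphi).
Qed.

Section ae_eq_of_preimage_integrals.
Context d (T : measurableType d) (R : realType) (mu : {measure set T -> \bar R}).
Variables (psi : T -> T) (B : nat -> nat -> set T).
Hypotheses (mpsi : measurable_fun setT psi) (mB : forall i j, measurable (B i j))
  (Bfin : forall i j, mu (psi @^-1` B i j) < +oo)
  (Bcover : {ae mu, forall x, exists i j, B i j (psi x)}).

Let mpre {D : set T} : measurable D -> measurable (psi @^-1` D).
Proof. by move=> mD; rewrite -[X in measurable X]setTI; exact: mpsi. Qed.

Lemma preimage_measurable_fun (g : T -> \bar R) :
  preimage_measurable psi g -> measurable_fun setT g.
Proof. by move=> pg _ Y mY; rewrite setTI; have [D [/mpre mD ->]] := pg Y mY. Qed.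

Lemma negligible_preimage_integral_gap (g1 g2 : T -> \bar R) (A : set T) (a b : R) :
  preimage_measurable psi g1 -> preimage_measurable psi g2 ->
  (forall x, 0 <= g2 x) -> measurable A -> mu (psi @^-1` A) < +oo ->
  (forall D, measurable D -> D `<=` A ->
     \int[mu]_(x in psi @^-1` D) g1 x = \int[mu]_(x in psi @^-1` D) g2 x) ->
  (0 <= a)%R -> (a < b)%R ->
  mu.-negligible (psi @^-1` A `&` [set x | g2 x <= a%:E] `&` [set x | b%:E <= g1 x]).
Proof.
move=> pg1 pg2 g20 mA Afin g12 a0 ab.
have [D2 [mD2 eD2]] := pg2 _ (emeasurable_itv `]-oo, a%:E]).
have [D1 [mD1 eD1]] := pg1 _ (emeasurable_itv `[b%:E, +oo[).
pose D := A `&` D2 `&` D1.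
have mD : measurable D by apply: measurableI => //; exact: measurableI.
have g2D x : (psi @^-1` D2) x <-> g2 x <= a%:E.
  by rewrite -eD2 /= in_itv.
have g1D x : (psi @^-1` D1) x <-> b%:E <= g1 x.
  by rewrite -eD1 /= in_itv /= andbT.
have -> : psi @^-1` A `&` [set x | g2 x <= a%:E] `&` [set x | b%:E <= g1 x]
    = psi @^-1` D.
  apply/seteqP; split => x /=.
  - by move=> [[Ax /g2D D2x] /g1D D1x].
  - by move=> [[Ax /g2D g2x] /g1D g1x].
have DA : mu (psi @^-1` D) <= mu (psi @^-1` A).
  by apply: le_measure; rewrite ?inE; [exact: mpre|exact: mpre|move=> x [[]]].
have Dfin : mu (psi @^-1` D) \is a fin_num.
  by rewrite ge0_fin_numE ?measure_ge0 //; exact: le_lt_trans DA Afin.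
have mpD := mpre mD.
have le2 : \int[mu]_(x in psi @^-1` D) g2 x <= a%:E * mu (psi @^-1` D).
  rewrite -integral_cst //; apply: ge0_le_integral => //.
  - exact/measurable_funTS/preimage_measurable_fun.
  - by move=> x [[_ /g2D]].
have le1 : b%:E * mu (psi @^-1` D) <= \int[mu]_(x in psi @^-1` D) g1 x.
  rewrite -integral_cst //; apply: ge0_le_integral => //.
  - by move=> x _; rewrite lee_fin; lra.
  - exact/measurable_funTS/preimage_measurable_fun.
  - by move=> x [_ /g1D].
rewrite g12 // in le1; last by move=> x [[]].
have := le_trans le1 le2; rewrite -(fineK Dfin) -!EFinM lee_fin => ba.
have D_ge0 : (0 <= fine (mu (psi @^-1` D)))%R by rewrite fine_ge0 ?measure_ge0.
have D0 : fine (mu (psi @^-1` D)) = 0%R by nra.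
by exists (psi @^-1` D); split; rewrite // -(fineK Dfin) D0.
Qed.

Lemma ae_le_of_preimage_integrals (g1 g2 : T -> \bar R) :
  preimage_measurable psi g1 -> preimage_measurable psi g2 ->
  (forall x, 0 <= g2 x) ->
  (forall i j D, measurable D -> D `<=` B i j ->
     \int[mu]_(x in psi @^-1` D) g1 x = \int[mu]_(x in psi @^-1` D) g2 x) ->
  {ae mu, forall x, g1 x <= g2 x}.
Proof.
move=> pg1 pg2 g20 g12.
pose gap i j (p q : nat) := psi @^-1` B i j
  `&` [set x | g2 x <= (p%:R / q.+1%:R)%:E]
  `&` [set x | (p.+1%:R / q.+1%:R)%:E <= g1 x].
have gap0 i j p q : mu.-negligible (gap i j p q).
  apply: negligible_preimage_integral_gap => //; first exact: g12.
  by rewrite ltr_pM2r ?invr_gt0 // ltr_nat.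
have gaps0 : mu.-negligible (\bigcup_i \bigcup_j \bigcup_q \bigcup_p gap i j p q).
  do 4 (apply: negligible_bigcup => ?); exact: gap0.
apply: negligibleS (negligibleU Bcover gaps0) => x /= /negP; rewrite -ltNge => g21.
case: (pselect (exists i j, B i j (psi x))) => [[i [j Bx]]|]; last by left.
right; exists i => //; exists j => //.
have [r g2r] : exists r : R, g2 x = r%:E.
  move: (g20 x) g21; case: (g2 x) => [r _ _|_|]; first by exists r.
  - by rewrite ltNge leey.
  - by rewrite leeNy_eq.
have r0 : (0 <= r)%R by rewrite -lee_fin -g2r.
rewrite g2r in g21.
have [p [q [rp ps]]] : exists p q : nat,
    (r <= p%:R / q.+1%:R)%R /\ (p.+1%:R / q.+1%:R)%:E <= g1 x.
  case g1x: (g1 x) g21 => [s| |] //; rewrite ?lte_fin => rs.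
  - by have [p [q [? ?]]] := nat_ratios_between _ _ r0 rs; exists p, q; rewrite lee_fin.
  - exists (Num.truncn r).+1, 0%N; rewrite divr1 leey; split => //.
    exact/ltW/truncnS_gt.
exists q => //; exists p => //; split; [split|] => //=.
by rewrite g2r lee_fin.
Qed.

Lemma ae_eq_of_preimage_integrals (g1 g2 : T -> \bar R) :
  preimage_measurable psi g1 -> preimage_measurable psi g2 ->
  (forall x, 0 <= g1 x) -> (forall x, 0 <= g2 x) ->
  (forall i j D, measurable D -> D `<=` B i j ->
     \int[mu]_(x in psi @^-1` D) g1 x = \int[mu]_(x in psi @^-1` D) g2 x) ->
  {ae mu, forall x, g1 x = g2 x}.
Proof.
move=> pg1 pg2 g10 g20 g12.
have le12 : {ae mu, forall x, g1 x <= g2 x} by exact: ae_le_of_preimage_integrals.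
have le21 : {ae mu, forall x, g2 x <= g1 x}.
  by apply: ae_le_of_preimage_integrals => // i j D mD DB; rewrite (g12 i j).
by apply: filterS2 le12 le21 => x ? ?; apply/eqP; rewrite eq_le; apply/andP.
Qed.

End ae_eq_of_preimage_integrals.

Lemma integral_preimage_indic d (T : measurableType d) (T' : Type) (R : realType)
    (mu : {measure set T -> \bar R}) (phi : T -> T') (D : set T') (f : T -> \bar R) :
  \int[mu]_(x in phi @^-1` D) f x = \int[mu]_x ((\1_D (phi x))%:E * f x).
Proof.
rewrite integral_mkcond; apply: eq_integral => x _; rewrite patchE indicE.
have -> : (phi x \in D) = (x \in phi @^-1` D) by apply/idP/idP; rewrite !inE.
by case: ifP => _; rewrite ?mul1e ?mul0e.
Qed.

Lemma mule_fine_invP {R : realType} {a b c : \bar R} :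
  c \is a fin_num -> c != 0 -> a = c * b <-> a * ((fine c)^-1)%:E = b.
Proof.
move=> /fineK <-; set r := fine c; rewrite eqe => r0 /=; split => [->|<-].
- by rewrite muleAC -EFinM mulfV // mul1e.
- by rewrite muleCA -EFinM mulfV // mule1.
Qed.

Section iterated_RN_derivatives.
Context {d} {T : measurableType d} {R : realType} {mu : {measure set T -> \bar R}}.
Context {phi : T -> T} {h : nat -> T -> \bar R}.
Hypotheses (mu_sf : sigma_finite setT mu) (phi_ns : nonsingular mu phi)
  (hRN : forall n, is_RN_deriv_iter mu phi n (h n))
  (h1_fin : {ae mu, forall x, h 1 x < +oo}).

Let mphi : measurable_fun setT phi. Proof. by case: phi_ns. Qed.
Let mpre {D : set T} : measurable D -> measurable (phi @^-1` D).
Proof. by move=> mD; rewrite -[X in measurable X]setTI; exact: mphi. Qed.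
Let mh n : measurable_fun setT (h n). Proof. by case: (hRN n). Qed.
Let h_ge0 n x : 0 <= h n x. Proof. by case: (hRN n) => _ []. Qed.
Let hE n A : measurable A -> mu (iter n phi @^-1` A) = \int[mu]_(x in A) h n x.
Proof. by case: (hRN n) => _ [] _; apply. Qed.

Lemma h0_ae_eq1 : {ae mu, forall x, h 0 x = 1}.
Proof.
have [F FT Ffin] := mu_sf.
have pm_id g : measurable_fun setT g -> preimage_measurable id g.
  move=> mg Y mY; exists (g @^-1` Y); split => //.
  by rewrite -[X in measurable X]setTI; exact: mg.
apply: (@ae_eq_of_preimage_integrals _ _ _ mu id (fun i _ => F i)).
- exact: measurable_id.
- by move=> i _; case: (Ffin i).
- by move=> i _; case: (Ffin i).
- apply: aeW => x; have : [set: T] x by [].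
  by rewrite FT => -[i _ Fi]; exists i, 0%N.
- exact: pm_id.
- exact: pm_id (measurable_cst _).
- exact: h_ge0.
- by move=> x; rewrite lee01.
- move=> i _ D mD _.
  by rewrite integral_cst // mul1e -(hE 0 D mD).
Qed.

Lemma h1_comp_gt0_fin : {ae mu, forall x, 0 < h 1 (phi x) < +oo}.
Proof.
have h1phi_fin := ae_comp_nonsingular phi_ns h1_fin.
suff : {ae mu, forall x, 0 < h 1 (phi x)}.
  by apply: filterS2 h1phi_fin => x -> ->.
pose Z := h 1 @^-1` [set 0].
have mZ : measurable Z.
  by rewrite -[X in measurable X]setTI; apply: mh => //; exact: emeasurable_set1.
exists (phi @^-1` Z); split; first exact: mpre.
- rewrite [mu _](hE 1 Z mZ) (eq_integral (cst 0)) ?integral0 //.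
  by move=> x; rewrite inE.
- move=> x /= h1x; apply/eqP; rewrite eq_le h_ge0 andbT leNgt; exact/negP.
Qed.

(* [fine] and the junk value 0^-1 = 0 make the ratio 0 where h_1 is 0 or +oo. *)
Definition h_ratio n (y : T) : \bar R := h n.+1 y * ((fine (h 1 y))^-1)%:E.

Let measurable_h_ratio n : measurable_fun setT (h_ratio n).
Proof.
apply: emeasurable_funM; first exact: mh.
apply/measurable_EFinP; apply: measurableT_comp; first exact: measurable_invr.
by apply: measurableT_comp; [exact: fine_measurable|exact: mh].
Qed.

Let h_ratio_ge0 n y : 0 <= h_ratio n y.
Proof. by rewrite mule_ge0 // lee_fin invr_ge0 fine_ge0. Qed.

Let preimage_measurable_h_ratio n :
  preimage_measurable phi (fun x => h_ratio n (phi x)).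
Proof.
move=> Y mY; exists (h_ratio n @^-1` Y); split => //.
by rewrite -[X in measurable X]setTI; exact: measurable_h_ratio.
Qed.

Lemma condexp_h_ratio n (g : T -> \bar R) : is_condexp mu phi (h n) g ->
  {ae mu, forall x, g x = h_ratio n (phi x)}.
Proof.
move=> [pg [g0 gE]]; have [F FT Ffin] := mu_sf.
pose B i j := F i `&` h 1 @^-1` `]0, j%:R%:E].
have mB i j : measurable (B i j).
  apply: measurableI; first by case: (Ffin i).
  by rewrite -[X in measurable X]setTI; apply: mh => //; exact: emeasurable_itv.
have Bh1 i j y : B i j y -> h 1 y \is a fin_num /\ h 1 y != 0.
  move=> [_ /=]; rewrite in_itv /= => /andP[h1_gt0 h1j].
  by rewrite gt_eqF // ge0_fin_numE // (le_lt_trans h1j) ?ltry.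
apply: (@ae_eq_of_preimage_integrals _ _ _ mu phi B) => //.
- move=> i j; rewrite [mu _](hE 1 _ (mB i j)).
  apply: (@le_lt_trans _ _ (\int[mu]_(x in B i j) j%:R%:E)).
    apply: ge0_le_integral => //; first exact: measurable_funTS.
    by move=> x [_ /=]; rewrite in_itv => /andP[].
  rewrite integral_cst // lte_mul_pinfty //.
  apply: le_lt_trans (proj2 (Ffin i)).
  by apply: le_measure; rewrite ?inE; [|case: (Ffin i)|move=> x []].
- apply: filterS h1_comp_gt0_fin => x /andP[h1_gt0 h1_lt].
  have : [set: T] (phi x) by [].
  rewrite FT => -[i _ Fi]; exists i, (Num.truncn (fine (h 1 (phi x)))).+1.
  split => //=; rewrite in_itv /= h1_gt0 /= -[h 1 (phi x)]fineK ?ge0_fin_numE //.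
  by rewrite lee_fin ltW // truncnS_gt.
- move=> i j D mD DB.
  have m1D : measurable_fun setT (fun y => (\1_D y)%:E : \bar R).
    by apply/measurable_EFinP; exact: measurable_indic.
  rewrite [LHS]integral_preimage_indic -(gE _ m1D) -?integral_preimage_indic //.
  transitivity (mu (iter n.+1 phi @^-1` D)); first by rewrite -(hE n _ (mpre mD)).
  rewrite hE // (@integral_comp_density _ _ _ mu phi (h 1) _ _ _ _ _ (hE 1)) //;
    last 2 first.
  - by move=> y /DB /Bh1 [].
  - exact: measurable_funTS.
  apply: eq_integral => y /set_mem /DB /Bh1 [h1y_fin h1y_neq0].
  by rewrite muleC; apply/(mule_fine_invP h1y_fin h1y_neq0).
Qed.

Lemma condexp_fixed_h_ratio n :
  condexp_fixed mu phi (h n) <-> {ae mu, forall x, h_ratio n (phi x) = h n x}.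
Proof.
split=> [[g [gE gh]]|hr].
  by apply: filterS2 (condexp_h_ratio _ _ gE) gh => x <-.
exists (fun x => h_ratio n (phi x)); split=> //; split=> //; split=> // u u_meas u_ge0.
apply: ae_eq_integral => //.
- exact: emeasurable_funM (measurableT_comp u_meas mphi) (mh n).
- apply: emeasurable_funM (measurableT_comp u_meas mphi) _.
  exact: measurableT_comp (measurable_h_ratio n) mphi.
- by apply: filterS hr => x hrx _; rewrite hrx.
Qed.

Lemma condexp_fixed_hP n : condexp_fixed mu phi (h n) <->
  {ae mu, forall x, h n.+1 (phi x) = h 1 (phi x) * h n x}.
Proof.
have ratioP x : 0 < h 1 (phi x) < +oo ->
    h n.+1 (phi x) = h 1 (phi x) * h n x <-> h_ratio n (phi x) = h n x.
  by move=> /andP[h1_gt0 h1_lt]; apply: mule_fine_invP; rewrite ?gt_eqF ?ge0_fin_numE.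
rewrite condexp_fixed_h_ratio.
by split=> H; apply: filterS2 h1_comp_gt0_fin H => x /ratioP ->.
Qed.

Hypothesis condexp_fixed_h : forall n, (0 < n)%N -> condexp_fixed mu phi (h n).

Lemma h_succ_comp n : {ae mu, forall x, h n.+1 (phi x) = h 1 (phi x) * h n x}.
Proof.
case: n => [|n]; last exact/condexp_fixed_hP/condexp_fixed_h.
by apply: filterS h0_ae_eq1 => x ->; rewrite mule1.
Qed.

Lemma h_add_iter m n : {ae mu, forall x, h (m + n) (iter n phi x) =
  (\prod_(1 <= k < n.+1) h 1 (iter k phi x)) * h m x}.
Proof.
elim: n => [|n IH]; first by apply: aeW => x; rewrite addn0 big_geq // mul1e.
have := ae_comp_nonsingular (nonsingular_iter n phi_ns) (h_succ_comp (m + n)).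
apply: filterS2 IH => x IHx hS.
rewrite addnS /= hS big_nat_recr //= IHx.
by rewrite muleA [X in X * h m x]muleC.
Qed.

Lemma h_iter n : {ae mu, forall x, h n (iter n phi x) =
  \prod_(1 <= k < n.+1) h 1 (iter k phi x)}.
Proof.
apply: filterS2 (h_add_iter 0 n) h0_ae_eq1 => x.
by rewrite add0n => -> ->; rewrite mule1.
Qed.

End iterated_RN_derivatives.

Theorem proposition26 (d : measure_display) (T : measurableType d) (R : realType)
  (mu : {measure set T -> \bar R}) (phi : T -> T)
  (h : nat -> T -> \bar R) :
  sigma_finite setT mu ->
  nonsingular mu phi ->
  (forall n, is_RN_deriv_iter mu phi n (h n)) ->
  {ae mu, forall x, h 1%N x < +oo} ->
  ( (forall n : nat, (0 < n)%N -> condexp_fixed mu phi (h n))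
    <->
    (forall n : nat, (0 < n)%N ->
       {ae mu, forall x, h n.+1 (phi x) = h 1%N (phi x) * h n x}) )
  /\
  ( (forall n : nat, (0 < n)%N -> condexp_fixed mu phi (h n)) ->
    (forall m n : nat, (0 < n)%N ->
       {ae mu, forall x, h (m + n)%N (iter n phi x) =
          (\prod_(1 <= k < n.+1) h 1%N (iter k phi x)) * h m x})
    /\
    (forall m n : nat, (0 < n)%N ->
       {ae mu, forall x, h (m + n)%N (iter n phi x) =
          h n (iter n phi x) * h m x})
    /\
    (forall n : nat, (0 < n)%N ->
       {ae mu, forall x, h n (iter n phi x) =
          \prod_(1 <= k < n.+1) h 1%N (iter k phi x)})
    /\
    (forall n : nat,
       {ae mu, forall x, h n.+1 (iter n phi x) =
          \prod_(0 <= k < n.+1) h 1%N (iter k phi x)}) ).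
Proof.
move=> mu_sf phi_ns hRN h1_fin.
have hP := condexp_fixed_hP mu_sf phi_ns hRN h1_fin.
split; first by split=> H n n0; apply/hP; exact: H.
move=> Hi; have add_iter := h_add_iter mu_sf phi_ns hRN h1_fin Hi.
have iter_h := h_iter mu_sf phi_ns hRN h1_fin Hi.
split; first by move=> m n _; exact: add_iter.
split; first by move=> m n _; apply: filterS2 (add_iter m n) (iter_h n) => x -> ->.
split; first by move=> n _; exact: iter_h.
move=> n; apply: filterS (add_iter 1%N n) => x; rewrite add1n => ->.
by rewrite [RHS]big_ltn // muleC.
Qed.
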